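(* Let $S$ be the tree with five vertices consisting of a root vertex of valence $1$, above it a vertex of valence $3$, and above each of the three incoming edges of the latter a vertex of valence $1$ (each carrying one leaf). Let $R$ be the tree with five vertices consisting of a root vertex of valence $2$, and above each of its two incoming edges a linear chain of two vertices of valence $1$ (each chain ending in one leaf). Then for every $n\in\mathbb N$, $$sh(S,L_n)=sh(R,L_n)=\sum_{k=0}^n\binom{k+2}{2}^2,$$ although $S$ and $R$ are not isomorphic.
   Context: A tree is a finite connected graph without cycles whose external edges are open. One external edge is the root; the others are leaves. Each vertex has one outgoing edge (towards the root) and a strictly positive number (valence) of incoming edges. No planar structure. $L_n$ is the linear tree with $n$ vertices, all of valence $1$. Shuffle: for trees $S,T$ with root edges $r_S,r_T$, a shuffle is a tree $A$ with edges labelled by pairs $(s,t)\in E(S)\times E(T)$ such that: (1) the root of $A$ is labelled $(r_S,r_T)$; (2) the labelling restricts to a bijection from leaves of $A$ onto $\mathrm{Leaves}(S)\times\mathrm{Leaves}(T)$; (3) if an edge labelled $(s,t)$ is not a leaf, the incoming edges of the vertex of $A$ above it are labelled either exactly $(s_1,t),\dots,(s_m,t)$ for $s_1,\dots,s_m$ the edges immediately above $s$ in $S$, or exactly $(s,t_1),\dots,(s,t_n)$ for $t_1,\dots,t_n$ the edges immediately above $t$ in $T$. Shuffles are taken up to isomorphism of labelled trees; $sh(S,T)$ is their number. *)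

From mathcomp Require Import all_boot.
Set Implicit Arguments. Unset Strict Implicit. Unset Printing Implicit Defensive.

(* A (rooted, non-planar) tree is represented from its root edge:
   [Node cs] is an edge; if [cs = [::]] it is an open external edge (a leaf),
   otherwise there is a vertex above it whose incoming edges are the root
   edges of the subtrees in [cs] (valence = size cs > 0).
   The order of [cs] is irrelevant: isomorphism ([tiso]) ignores it. *)
Inductive tree := Node of seq tree.

Inductive tiso : tree -> tree -> Prop :=
| TIso cs ds : tiso_list cs ds -> tiso (Node cs) (Node ds)
with tiso_list : seq tree -> seq tree -> Prop :=
| TL_nil : tiso_list [::] [::]
| TL_cons c cs d ds1 ds2 :
    tiso c d -> tiso_list cs (ds1 ++ ds2) -> tiso_list (c :: cs) (ds1 ++ d :: ds2).

(* Edges of a tree are addressed by paths from the root edge: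
   [::] is the root edge, [rcons p i] is the i-th edge immediately above p. *)
Fixpoint sub (T : tree) (p : seq nat) : option tree :=
  match p with
  | [::] => Some T
  | i :: p' => let: Node cs := T in
               match drop i cs with c :: _ => sub c p' | [::] => None end
  end.

Definition is_edge (T : tree) (p : seq nat) : bool :=
  if sub T p is Some _ then true else false.

Definition is_leaf (T : tree) (p : seq nat) : bool :=
  if sub T p is Some (Node [::]) then true else false.

Definition children (T : tree) (p : seq nat) : seq (seq nat) :=
  if sub T p is Some (Node cs) then mkseq (fun i => rcons p i) (size cs) else [::].

Fixpoint L (n : nat) : tree :=
  if n is n'.+1 then Node [:: L n'] else Node [::].

(* Edge-labelled trees; labels are pairs (s,t) of edge addresses *)
Definition label := (seq nat * seq nat)%type.
Inductive ltree := LNode of label & seq ltree.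

Definition llab (A : ltree) : label := let: LNode l _ := A in l.

Fixpoint lleaves (A : ltree) : seq label :=
  let: LNode l cs := A in
  if cs is [::] then [:: l] else flatten (map lleaves cs).

Inductive liso : ltree -> ltree -> Prop :=
| LIso l cs ds : liso_list cs ds -> liso (LNode l cs) (LNode l ds)
with liso_list : seq ltree -> seq ltree -> Prop :=
| LL_nil : liso_list [::] [::]
| LL_cons c cs d ds1 ds2 :
    liso c d -> liso_list cs (ds1 ++ ds2) -> liso_list (c :: cs) (ds1 ++ d :: ds2).

Fixpoint shuf_ok (S T : tree) (A : ltree) : bool :=
  let: LNode (s, t) cs := A in
  if cs is [::] then true
  else (perm_eq (map llab cs) [seq (s', t) | s' <- children S s]
        || perm_eq (map llab cs) [seq (s, t') | t' <- children T t])
       && all (shuf_ok S T) cs.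

Definition is_shuffle (S T : tree) (A : ltree) : Prop :=
  [/\ llab A = ([::], [::]),
      uniq (lleaves A)
      & (forall x : label, (x \in lleaves A) = is_leaf S x.1 && is_leaf T x.2)]
  /\ shuf_ok S T A.

Definition sh_is (S T : tree) (N : nat) : Prop :=
  exists f : nat -> ltree,
    [/\ forall i, i < N -> is_shuffle S T (f i),
        forall i j, i < N -> j < N -> liso (f i) (f j) -> i = j
      & forall A, is_shuffle S T A -> exists2 i, i < N & liso A (f i)].

Definition treeS : tree :=
  Node [:: Node [:: Node [:: Node [::]]; Node [:: Node [::]]; Node [:: Node [::]]]].

Definition treeR : tree := Node [:: L 2; L 2].

(** A shuffle of [S] and [T] is built top-down: above each edge [(s, t)] that is
    not a pair of leaves sits a vertex splitting either [s] or [t], followed by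
    one shuffle for each resulting child pair.  Listing the children in the order
    of the edges of [S] (or [T]) gives one representative per isomorphism class,
    because siblings carry distinct labels and an isomorphism must therefore match
    them label by label.  Hence [sh] satisfies
      sh(σ, τ) = [σ, τ are leaves] + Π_i sh(σ_i, τ) + Π_j sh(σ, τ_j),
    an empty product counting 0.  For [τ = L_n] this gives
    sh(σ, L_n) = Σ_(k <= n) Π_i sh(σ_i, L_k), whence sh(L_a, L_m) = C(a+m, a) by
    the hockey-stick identity.  The summand is C(k+2, 2)^2 directly for [R], and
    Σ_(j <= k) (j+1)^3 = C(k+2, 2)^2 (Nicomachus) for [S].  The roots of [S] and
    [R] have valences 1 and 2, so the trees are not isomorphic. *)

From mathcomp Require Import all_boot.
From HB Require Import structures.
From mathcomp Require Import zify.
Set Implicit Arguments. Unset Strict Implicit. Unset Printing Implicit Defensive.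

(* Structurally recursive form of [mkseq (fun i => f i (nth x0 s i)) (size s)]
   (see [mapiE]), so that it can be used in the nested fixpoints below. *)
Fixpoint mapi A B (f : nat -> A -> B) (k : nat) (s : seq A) : seq B :=
  if s is x :: s' then f k x :: mapi f k.+1 s' else [::].

Lemma mapiE A B (x0 : A) (f : nat -> A -> B) k s :
  mapi f k s = mkseq (fun i => f (k + i) (nth x0 s i)) (size s).
Proof.
elim: s k => //= x s IHs k; rewrite IHs /mkseq /= -[1]/(1 + 0) iotaDl -map_comp.
by rewrite addn0; congr (_ :: _); apply: eq_map => i /=; rewrite add1n addSnnS.
Qed.

Lemma all2_nthP S T (x0 : S) (y0 : T) (r : S -> T -> bool) s t :
  reflect (size s = size t /\ forall i, i < size s -> r (nth x0 s i) (nth y0 t i))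
          (all2 r s t).
Proof.
elim: s t => [|x s IHs] [|y t] /=.
- by apply: ReflectT; split.
- by apply: ReflectF => -[].
- by apply: ReflectF => -[].
apply: (iffP andP) => [[rxy /IHs[eq_st rst]]|[[eq_st] rst]].
  by split=> [|[|i] //=]; [rewrite eq_st | apply: rst].
by split; [apply: (rst 0) | apply/IHs; split=> // i; apply: (rst i.+1)].
Qed.

Fixpoint cartprod T (ss : seq (seq T)) : seq (seq T) :=
  if ss is s :: ss' then [seq x :: xs | x <- s, xs <- cartprod ss'] else [:: [::]].

Lemma size_cartprod T (ss : seq (seq T)) : size (cartprod ss) = \prod_(s <- ss) size s.
Proof. by elim: ss => [|s ss IHss]; rewrite ?big_nil ?big_cons //= size_allpairs IHss. Qed.

Lemma mem_cartprod (T : eqType) (ss : seq (seq T)) xs :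
  (xs \in cartprod ss) = all2 (fun x s => x \in s) xs ss.
Proof.
elim: ss xs => [|s ss IHss] [|x xs] //=.
  by apply/negP => /allpairsP[[y ys] [_ _]].
apply/idP/idP => [/allpairsP[[y ys] /= [sy ys_ss [-> ->]]]|/andP[sx xs_ss]].
  by rewrite sy -IHss.
by apply/allpairsP; exists (x, xs); rewrite /= IHss.
Qed.

Lemma cartprod_uniq (T : eqType) (ss : seq (seq T)) : all uniq ss -> uniq (cartprod ss).
Proof.
elim: ss => //= s ss IHss /andP[uniq_s /IHss uniq_ss].
by apply: allpairs_uniq => // -[x xs] [y ys] _ _ [-> ->].
Qed.

Lemma allpairs_flattenl S T R (f : S -> T -> R) ss t :
  [seq f x y | x <- flatten ss, y <- t] = flatten [seq [seq f x y | x <- s, y <- t] | s <- ss].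
Proof. by elim: ss => //= s ss IHss; rewrite allpairs_cat IHss. Qed.

Lemma perm_allpairs_flattenr S T (R : eqType) (f : S -> T -> R) s ts :
  perm_eq [seq f x y | x <- s, y <- flatten ts]
          (flatten [seq [seq f x y | x <- s, y <- t] | t <- ts]).
Proof.
elim: ts => /= [|t ts IHts]; first by elim: s.
by rewrite perm_allpairs_catr perm_cat2l.
Qed.

Lemma perm_flatten_all2 (T : eqType) (ss1 ss2 : seq (seq T)) :
  all2 perm_eq ss1 ss2 -> perm_eq (flatten ss1) (flatten ss2).
Proof.
elim: ss1 ss2 => [|s1 ss1 IHss] [|s2 ss2] //= /andP[s12 /IHss].
exact: perm_cat.
Qed.

Lemma fin_choice T (x0 : T) (P : nat -> T -> Prop) n :
  (forall i, i < n -> exists x, P i x) ->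
  exists2 xs, size xs = n & forall i, i < n -> P i (nth x0 xs i).
Proof.
elim: n => [|n IHn] exP; first by exists [::].
have [|xs size_xs Pxs] := IHn; first by move=> i /ltnW; apply: exP.
have [x Px] := exP n (ltnSn n).
exists (rcons xs x) => [|i]; first by rewrite size_rcons size_xs.
rewrite ltnS leq_eqVlt nth_rcons size_xs => /orP[/eqP->|lt_i_n].
  by rewrite ltnn eqxx.
by rewrite lt_i_n; apply: Pxs.
Qed.

Lemma uniq_map_inj_in (T1 T2 : eqType) (f : T1 -> T2) s :
  uniq (map f s) -> {in s &, injective f}.
Proof.
elim: s => //= z s IHs /andP[fz_s uniq_fs] x y.
rewrite !inE => /orP[/eqP->|sx] /orP[/eqP->|sy] // fxy.
- by rewrite fxy map_f in fz_s.
- by rewrite -fxy map_f in fz_s.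
- exact: IHs.
Qed.

Lemma map_mkseq_nth T1 T2 (x0 : T1) (f : T1 -> T2) s : map f s = mkseq (f \o nth x0 s) (size s).
Proof. by rewrite /mkseq map_comp -/(mkseq _ _) mkseq_nth. Qed.

Lemma all_mkseqP (T : eqType) (a : pred T) (F : nat -> T) n :
  reflect (forall i, i < n -> a (F i)) (all a (mkseq F n)).
Proof.
apply: (iffP allP) => [aF i lt_in | aF x /mapP[i]].
  by apply/aF/mapP; exists i; rewrite ?mem_iota.
by rewrite mem_iota => /andP[_ lt_in] ->; apply: aF.
Qed.

(** * Addresses and leaves of trees *)

Local Notation leaf := (Node [::]).

Lemma tree_nth_ind (P : tree -> Prop) :
  (forall cs, (forall i, i < size cs -> P (nth leaf cs i)) -> P (Node cs)) ->
  forall t, P t.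
Proof.
move=> IH; fix tree_nth_ind 1 => -[cs]; apply: IH.
elim: cs => [|c cs IHcs] i lt_i; first by exfalso; rewrite ltn0 in lt_i.
by case: i lt_i => [|i] lt_i; [exact: tree_nth_ind | exact: IHcs].
Qed.

Lemma sub_rcons S p cs i : sub S p = Some (Node cs) -> i < size cs ->
  sub S (rcons p i) = Some (nth leaf cs i).
Proof.
elim: p S => [|j p IHp] [ds] /=; first by move=> [->] lt_i; rewrite (drop_nth leaf lt_i).
by case: (drop j ds) => // d _; apply: IHp.
Qed.

Lemma childrenE S p cs : sub S p = Some (Node cs) -> children S p = mkseq (rcons p) (size cs).
Proof. by rewrite /children => ->. Qed.

Lemma is_leafE S p cs : sub S p = Some (Node cs) -> is_leaf S p = nilp cs.
Proof. by rewrite /is_leaf => ->; case: cs. Qed.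

Lemma is_leaf_cons cs i a : is_leaf (Node cs) (i :: a) = (i < size cs) && is_leaf (nth leaf cs i) a.
Proof.
rewrite /is_leaf /=; case: ltnP => [lt_i | le_i]; first by rewrite (drop_nth leaf lt_i).
by rewrite drop_oversize.
Qed.

Fixpoint leaf_paths (t : tree) : seq (seq nat) :=
  let: Node cs := t in
  if cs is [::] then [:: [::]]
  else flatten (mapi (fun i c => map (cons i) (leaf_paths c)) 0 cs).

Lemma leaf_pathsE cs : 0 < size cs ->
  leaf_paths (Node cs) = [seq i :: a | i <- iota 0 (size cs), a <- leaf_paths (nth leaf cs i)].
Proof.
case: cs => // c cs _.
by rewrite -[leaf_paths _]/(flatten (mapi _ 0 (c :: cs))) (mapiE leaf).
Qed.

Lemma mem_leaf_paths t a : (a \in leaf_paths t) = is_leaf t a.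
Proof.
elim/tree_nth_ind: t a => -[_ [|i a] //|c cs IHcs a].
rewrite leaf_pathsE //; case: a => [|i a].
  by apply/negP => /allpairsPdep[? [? []]].
rewrite is_leaf_cons; apply/allpairsPdep/andP => [[j [b [+ + [-> ->]]]]|[lt_i ai]].
  by rewrite mem_iota add0n => /andP[_ lt_j]; rewrite IHcs.
by exists i, a; rewrite mem_iota add0n IHcs.
Qed.

Lemma leaf_paths_uniq t : uniq (leaf_paths t).
Proof.
elim/tree_nth_ind: t => -[//|c cs IHcs]; rewrite leaf_pathsE //.
apply: allpairs_uniq_dep => [|i|]; first exact: iota_uniq.
  by rewrite mem_iota => /andP[_ /IHcs].
by move=> [i a] [j b] _ _ /= [-> ->].
Qed.

(** * Isomorphism of labelled trees *)

Fixpoint ltree_code (A : ltree) : GenTree.tree label :=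
  let: LNode l xs := A in GenTree.Node 0 (GenTree.Leaf l :: map ltree_code xs).

Fixpoint ltree_decode (c : GenTree.tree label) : option ltree :=
  match c with
  | GenTree.Node 0 (GenTree.Leaf l :: cs) => Some (LNode l (pmap ltree_decode cs))
  | _ => None
  end.

Lemma ltree_codeK : pcancel ltree_code ltree_decode.
Proof.
rewrite /pcancel; fix ltree_codeK 1 => -[l xs] /=; congr (Some (LNode l _)).
by elim: xs => //= x xs ->; rewrite ltree_codeK.
Qed.

HB.instance Definition _ := Equality.copy ltree (pcan_type ltree_codeK).

Local Notation lleaf := (LNode ([::], [::]) [::]).

Definition child_labs (A : ltree) : seq label := let: LNode _ xs := A in map llab xs.

Lemma lleaves_node l xs : 0 < size xs -> lleaves (LNode l xs) = flatten (map lleaves xs).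
Proof. by case: xs. Qed.

Lemma liso_lab A B : liso A B -> llab A = llab B.
Proof. by case. Qed.

Lemma liso_list_perm xs ys : liso_list xs ys -> perm_eq (map llab xs) (map llab ys).
Proof.
elim=> // x xs1 y ys1 ys2 /liso_lab lab_xy _ IH.
by rewrite map_cat /= perm_sym -cat1s perm_catCA /= -map_cat lab_xy perm_cons perm_sym.
Qed.

Lemma liso_children l l' xs ys : liso (LNode l xs) (LNode l' ys) -> liso_list xs ys.
Proof. by move=> iso; inversion iso. Qed.

Lemma liso_child_labs A B : liso A B -> perm_eq (child_labs A) (child_labs B).
Proof. by case=> l xs ys /liso_list_perm. Qed.

Lemma liso_list_nth xs ys : liso_list xs ys -> map llab xs = map llab ys ->
  uniq (map llab xs) -> forall i, i < size xs -> liso (nth lleaf xs i) (nth lleaf ys i).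
Proof.
elim=> // x xs1 y ys1 ys2 iso_xy _ IH.
case: ys1 IH => [|z ys1] IH /= [lab_x lab_xs] /andP[x_xs uniq_xs].
  by case=> [|i] //= lt_i; apply: IH.
by rewrite lab_xs map_cat mem_cat /= inE -(liso_lab iso_xy) eqxx orbT in x_xs.
Qed.

Lemma liso_list_build xs ys :
  perm_eq (map llab xs) (map llab ys) -> uniq (map llab ys) ->
  (forall x y, x \in xs -> y \in ys -> llab x = llab y -> liso x y) -> liso_list xs ys.
Proof.
elim: xs ys => [|x xs IHxs] ys perm_xys uniq_ys iso_xys.
  by case: ys perm_xys uniq_ys iso_xys => [|y ys] /perm_size // _ _ _; apply: LL_nil.
have /mapP[y ys_y lab_xy] : llab x \in map llab ys by rewrite -(perm_mem perm_xys) mem_head.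
case/splitPr: ys_y perm_xys uniq_ys iso_xys => ys1 ys2 perm_xys uniq_ys iso_xys.
have perm_mid : perm_eq (ys1 ++ y :: ys2) (y :: ys1 ++ ys2) by rewrite -cat1s perm_catCA.
apply: LL_cons; first by apply: iso_xys; rewrite ?mem_head // mem_cat mem_head orbT.
apply: IHxs => [|| x' y' xs_x' ys_y'].
- by move: perm_xys; rewrite (permPr (perm_map llab perm_mid)) /= lab_xy perm_cons.
- by move: uniq_ys; rewrite (perm_uniq (perm_map llab perm_mid)) /= => /andP[].
- apply: iso_xys; first by rewrite inE xs_x' orbT.
  by rewrite (perm_mem perm_mid) inE ys_y' orbT.
Qed.

(** * Canonical representatives of shuffles *)

(* No tree at all when [Fs] is empty: vertices have positive valence. *)
Definition branch (l : label) (Fs : seq (seq ltree)) : seq ltree :=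
  if Fs is [::] then [::] else [seq LNode l xs | xs <- cartprod Fs].

Definition prod_or0 (s : seq nat) : nat := if s is [::] then 0 else \prod_(x <- s) x.

Lemma size_branch l Fs : size (branch l Fs) = prod_or0 (map size Fs).
Proof. by case: Fs => // F Fs; rewrite size_map size_cartprod /prod_or0 big_map. Qed.

Lemma branchP l Fs x :
  reflect (0 < size Fs /\ exists2 xs, xs \in cartprod Fs & x = LNode l xs) (x \in branch l Fs).
Proof.
case: Fs => [|F Fs]; first by apply: ReflectF => -[].
by apply: (iffP mapP) => [[xs xsF ->]|[_ [xs xsF ->]]]; [split=> //; exists xs | exists xs].
Qed.

Lemma branch_lab l Fs x : x \in branch l Fs -> llab x = l.
Proof. by case/branchP=> _ [xs _ ->]. Qed.

Lemma branch_uniq l Fs : all uniq Fs -> uniq (branch l Fs).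
Proof.
case: Fs => // F Fs uniqF; rewrite map_inj_uniq ?cartprod_uniq //.
by move=> xs ys [].
Qed.

Lemma cartprod_mkseqP (T : eqType) (x0 : T) (F : nat -> seq T) n xs :
  reflect (size xs = n /\ forall i, i < n -> nth x0 xs i \in F i) (xs \in cartprod (mkseq F n)).
Proof.
rewrite mem_cartprod; apply: (iffP (all2_nthP x0 [::] _ _ _)); rewrite size_mkseq.
  by case=> sz_xs xsF; split=> // i lt_in; rewrite -(nth_mkseq [::] F lt_in) xsF ?sz_xs.
by case=> sz_xs xsF; split=> // i; rewrite sz_xs => lt_in; rewrite nth_mkseq ?xsF.
Qed.

Section Branch.

Variables (l : label) (lab : nat -> label) (F : nat -> seq ltree) (n : nat).
Hypotheses (lab_inj : injective lab)
           (F_lab : forall i x, x \in F i -> llab x = lab i).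

Local Notation B := (branch l (mkseq F n)).

Lemma cartprod_labs xs : xs \in cartprod (mkseq F n) -> map llab xs = mkseq lab n.
Proof.
case/(cartprod_mkseqP lleaf) => sz_xs xsF.
apply: (@eq_from_nth _ ([::], [::])) => [|i]; rewrite size_map ?size_mkseq // sz_xs => lt_in.
by rewrite (nth_map lleaf) ?sz_xs // nth_mkseq // (F_lab (xsF i lt_in)).
Qed.

Lemma branch_child_labs x : x \in B -> child_labs x = mkseq lab n.
Proof. by case/branchP=> _ [xs /cartprod_labs lab_xs ->]. Qed.

Lemma branch_liso_inj :
    (forall i, i < n -> {in F i &, forall x y, liso x y -> x = y}) ->
  {in B &, forall x y, liso x y -> x = y}.
Proof.
move=> injF _ _ /branchP[_ [xs xsF ->]] /branchP[_ [ys ysF ->]] iso_xys.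
have [/cartprod_labs lab_xs /cartprod_labs lab_ys] := (xsF, ysF).
case/(cartprod_mkseqP lleaf): xsF ysF => sz_xs xsF /(cartprod_mkseqP lleaf)[sz_ys ysF].
congr LNode; apply: (eq_from_nth (x0 := lleaf)) => [|i]; first by rewrite sz_xs sz_ys.
rewrite sz_xs => lt_in; apply: (injF i lt_in); [exact: xsF | exact: ysF |].
by apply: (liso_list_nth (liso_children iso_xys)); rewrite ?lab_xs ?lab_ys ?mkseq_uniq ?sz_xs.
Qed.

Lemma branch_complete xs : 0 < size xs -> perm_eq (map llab xs) (mkseq lab n) ->
    (forall x i, x \in xs -> i < n -> llab x = lab i -> exists2 g, g \in F i & liso x g) ->
  exists2 g, g \in B & liso (LNode l xs) g.
Proof.
move=> xs_gt0 perm_xs isoF.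
have uniq_xs : uniq (map llab xs) by rewrite (perm_uniq perm_xs) mkseq_uniq.
have n_gt0 : 0 < n by rewrite -(size_mkseq lab n) -(perm_size perm_xs) size_map.
pose P i y := y \in F i /\ exists2 x, x \in xs & llab x = lab i /\ liso x y.
have [ys sz_ys ysP] : exists2 ys, size ys = n & forall i, i < n -> P i (nth lleaf ys i).
  apply: fin_choice => i lt_in.
  have /mapP[x xs_x lab_x] : lab i \in map llab xs.
    by rewrite (perm_mem perm_xs); apply/mapP; exists i; rewrite ?mem_iota.
  have [g Fg iso_xg] := isoF x i xs_x lt_in (esym lab_x).
  by exists g; split=> //; exists x.
have ysF : ys \in cartprod (mkseq F n) by apply/(cartprod_mkseqP lleaf); split=> // i /ysP[].
exists (LNode l ys); first by apply/branchP; split; [rewrite size_mkseq | exists ys].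
constructor; apply: liso_list_build; rewrite ?(cartprod_labs ysF) ?mkseq_uniq //.
move=> x y xs_x /(nthP lleaf)[i]; rewrite sz_ys => lt_in <- lab_xy.
have [Fy [x' xs_x' [lab_x' iso_x'y]]] := ysP i lt_in.
suff -> : x = x' by [].
by apply: (uniq_map_inj_in uniq_xs) => //; rewrite lab_xy lab_x' (F_lab Fy).
Qed.

Lemma branch_lleaves (G : nat -> seq label) :
    (forall i x, i < n -> x \in F i -> perm_eq (lleaves x) (G i)) ->
  forall x, x \in B -> perm_eq (lleaves x) (flatten (mkseq G n)).
Proof.
move=> leavesF _ /branchP[n_gt0 [xs /(cartprod_mkseqP lleaf)[sz_xs xsF] ->]].
rewrite size_mkseq in n_gt0; rewrite lleaves_node ?sz_xs //.
apply/perm_flatten_all2/(all2_nthP [::] [::]); rewrite size_map size_mkseq sz_xs.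
split=> // i lt_in; rewrite (nth_map lleaf) ?sz_xs // nth_mkseq //.
exact: leavesF (xsF i lt_in).
Qed.

End Branch.

(* [shuffles σ p τ q] lists one shuffle of [σ] and [τ] from each isomorphism
   class, its edges labelled by their addresses in the ambient trees, [σ] and [τ]
   sitting at addresses [p] and [q]; the children of a vertex are listed in the
   order of the edges they come from. *)
Fixpoint shuffles (σ : tree) (p : seq nat) {struct σ} : tree -> seq nat -> seq ltree :=
  fix shuffles_r (τ : tree) (q : seq nat) {struct τ} : seq ltree :=
  let: Node cs := σ in let: Node ds := τ in
  (if nilp cs && nilp ds then [:: LNode (p, q) [::]] else [::])
  ++ branch (p, q) (mapi (fun i c => shuffles c (rcons p i) τ q) 0 cs)
  ++ branch (p, q) (mapi (fun j d => shuffles_r d (rcons q j)) 0 ds).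

Fixpoint nshuffles (σ : tree) {struct σ} : tree -> nat :=
  fix nshuffles_r (τ : tree) {struct τ} : nat :=
  let: Node cs := σ in let: Node ds := τ in
  (nilp cs && nilp ds) + prod_or0 [seq nshuffles c τ | c <- cs]
  + prod_or0 [seq nshuffles_r d | d <- ds].

Definition lbranch cs p ds q :=
  branch (p, q) (mkseq (fun i => shuffles (nth leaf cs i) (rcons p i) (Node ds) q) (size cs)).

Definition rbranch cs p ds q :=
  branch (p, q) (mkseq (fun j => shuffles (Node cs) p (nth leaf ds j) (rcons q j)) (size ds)).

Lemma shufflesE cs p ds q : shuffles (Node cs) p (Node ds) q =
  (if nilp cs && nilp ds then [:: LNode (p, q) [::]] else [::])
  ++ lbranch cs p ds q ++ rbranch cs p ds q.
Proof. by rewrite [LHS]/= !(mapiE leaf); reflexivity. Qed.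

Lemma nshufflesE cs ds : nshuffles (Node cs) (Node ds) =
  (nilp cs && nilp ds) + prod_or0 [seq nshuffles c (Node ds) | c <- cs]
  + prod_or0 [seq nshuffles (Node cs) d | d <- ds].
Proof. by []. Qed.

Lemma shuffle_ind (P : tree -> tree -> Prop) :
    (forall cs ds, (forall i, i < size cs -> forall τ, P (nth leaf cs i) τ) ->
       (forall j, j < size ds -> P (Node cs) (nth leaf ds j)) -> P (Node cs) (Node ds)) ->
  forall σ τ, P σ τ.
Proof. by move=> IH; elim/tree_nth_ind=> cs IHcs; elim/tree_nth_ind=> ds IHds; apply: IH. Qed.

Definition lab_l (p q : seq nat) (i : nat) : label := (rcons p i, q).
Definition lab_r (p q : seq nat) (j : nat) : label := (p, rcons q j).

Lemma lab_l_inj p q : injective (lab_l p q).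
Proof. by move=> i j [eq_ij]; apply: rcons_injr eq_ij. Qed.

Lemma lab_r_inj p q : injective (lab_r p q).
Proof. by move=> i j [eq_ij]; apply: rcons_injr eq_ij. Qed.

Lemma mkseq_lab_lr p q m n : 0 < m -> ~~ perm_eq (mkseq (lab_l p q) m) (mkseq (lab_r p q) n).
Proof.
move=> m_gt0; apply/negP => perm_lr.
have /mapP[j _ [/(congr1 size)]] : lab_l p q 0 \in mkseq (lab_r p q) n.
  by rewrite -(perm_mem perm_lr); apply/mapP; exists 0; rewrite ?mem_iota.
by rewrite size_rcons; lia.
Qed.

Lemma shuffles_lab σ τ p q x : x \in shuffles σ p τ q -> llab x = (p, q).
Proof.
case: σ τ => [cs] [ds]; rewrite shufflesE !mem_cat => /or3P[|/branch_lab|/branch_lab] //.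
by case: ifP => // _; rewrite inE => /eqP->.
Qed.

Lemma lbranch_lab cs τ p q i x :
  x \in shuffles (nth leaf cs i) (rcons p i) τ q -> llab x = lab_l p q i.
Proof. exact: shuffles_lab. Qed.

Lemma rbranch_lab σ ds p q j y :
  y \in shuffles σ p (nth leaf ds j) (rcons q j) -> llab y = lab_r p q j.
Proof. exact: shuffles_lab. Qed.

Lemma lbranch_rbranch_labs cs p ds q x y : x \in lbranch cs p ds q -> y \in rbranch cs p ds q ->
  ~~ perm_eq (child_labs x) (child_labs y).
Proof.
move=> lx ry; have /branchP[+ _] := lx; rewrite size_mkseq => cs_gt0.
rewrite (branch_child_labs (@lbranch_lab cs (Node ds) p q) lx).
by rewrite (branch_child_labs (@rbranch_lab (Node cs) ds p q) ry) mkseq_lab_lr.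
Qed.

Lemma size_shuffles σ τ p q : size (shuffles σ p τ q) = nshuffles σ τ.
Proof.
move: σ τ p q; apply: shuffle_ind => cs ds IHcs IHds p q.
rewrite shufflesE nshufflesE !size_cat !size_branch addnA.
rewrite (map_mkseq_nth leaf _ cs) (map_mkseq_nth leaf _ ds) /mkseq -!map_comp.
congr (_ + prod_or0 _ + prod_or0 _); first by case: (_ && _).
  by apply/eq_in_map => i; rewrite mem_iota => /andP[_ lt_i]; apply: IHcs.
by apply/eq_in_map => j; rewrite mem_iota => /andP[_ lt_j]; apply: IHds.
Qed.

Lemma shuffles_uniq σ τ p q : uniq (shuffles σ p τ q).
Proof.
move: σ τ p q; apply: shuffle_ind => cs ds IHcs IHds p q.
rewrite shufflesE; case: ifP => [/andP[/nilP-> /nilP->] // | _].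
have uniq_l : uniq (lbranch cs p ds q).
  by apply/branch_uniq/all_mkseqP => i lt_i; apply: IHcs.
have uniq_r : uniq (rbranch cs p ds q).
  by apply/branch_uniq/all_mkseqP => j lt_j; apply: IHds.
rewrite cat0s cat_uniq uniq_l uniq_r andbT /=.
apply/hasPn => x rx; apply/negP => lx.
by have := lbranch_rbranch_labs lx rx; rewrite perm_refl.
Qed.

Lemma shuffles_liso_inj σ τ p q : {in shuffles σ p τ q &, forall x y, liso x y -> x = y}.
Proof.
move: σ τ p q; apply: shuffle_ind => cs ds IHcs IHds p q x y.
rewrite shufflesE; case: ifP => [/andP[/nilP-> /nilP->] | _].
  by rewrite !inE => /eqP-> /eqP->.
rewrite cat0s !mem_cat => /orP[lx|rx] /orP[ly|ry] iso_xy.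
- apply: (branch_liso_inj (@lab_l_inj p q) (@lbranch_lab cs (Node ds) p q) _ lx ly iso_xy).
  by move=> i lt_i; apply: IHcs.
- by have := lbranch_rbranch_labs lx ry; rewrite (liso_child_labs iso_xy).
- by have := lbranch_rbranch_labs ly rx; rewrite perm_sym (liso_child_labs iso_xy).
- apply: (branch_liso_inj (@lab_r_inj p q) (@rbranch_lab (Node cs) ds p q) _ rx ry iso_xy).
  by move=> j lt_j; apply: IHds.
Qed.

Lemma shuffles_lleaves σ τ p q x : x \in shuffles σ p τ q ->
  perm_eq (lleaves x) [seq (p ++ a, q ++ b) | a <- leaf_paths σ, b <- leaf_paths τ].
Proof.
move: σ τ p q x; apply: shuffle_ind => cs ds IHcs IHds p q x.
rewrite shufflesE !mem_cat => /or3P[|lx|rx].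
- case: ifP => // /andP[/nilP-> /nilP->].
  by rewrite inE => /eqP->; rewrite /= !cats0.
- have /branchP[+ _] := lx; rewrite size_mkseq => cs_gt0.
  have : perm_eq (lleaves x) (flatten (mkseq (fun i =>
      [seq (rcons p i ++ a, q ++ b) | a <- leaf_paths (nth leaf cs i), b <- leaf_paths (Node ds)])
      (size cs))).
    by apply: (branch_lleaves _ lx) => i x' lt_i; apply: IHcs.
  move/permPl->; rewrite (leaf_pathsE cs_gt0) allpairs_flattenl /mkseq -map_comp.
  apply/permP => z; congr (count z (flatten _)); apply: eq_map => i /=.
  rewrite allpairs_mapl.
  by apply: eq_allpairs => a b; rewrite cat_rcons.
- have /branchP[+ _] := rx; rewrite size_mkseq => ds_gt0.
  have : perm_eq (lleaves x) (flatten (mkseq (fun j =>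
      [seq (p ++ a, rcons q j ++ b) | a <- leaf_paths (Node cs), b <- leaf_paths (nth leaf ds j)])
      (size ds))).
    by apply: (branch_lleaves _ rx) => j y lt_j; apply: IHds.
  move/permPl->; rewrite (leaf_pathsE ds_gt0) perm_sym (permPl (perm_allpairs_flattenr _ _ _)).
  rewrite /mkseq -map_comp; apply/permP => z; congr (count z (flatten _)).
  apply: eq_map => j /=; rewrite allpairs_mapr.
  by apply: eq_allpairs => a b; rewrite cat_rcons.
Qed.

Lemma shuf_ok_node S T p q xs : 0 < size xs ->
  shuf_ok S T (LNode (p, q) xs) =
    (perm_eq (map llab xs) [seq (s', q) | s' <- children S p]
     || perm_eq (map llab xs) [seq (p, t') | t' <- children T q])
    && all (shuf_ok S T) xs.
Proof. by case: xs. Qed.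

Section ShufflesOfSubtrees.

Variables S T : tree.

Lemma shuffles_shuf_ok σ τ p q x : sub S p = Some σ -> sub T q = Some τ ->
  x \in shuffles σ p τ q -> shuf_ok S T x.
Proof.
move: σ τ p q x; apply: shuffle_ind => cs ds IHcs IHds p q x Sp Tq.
rewrite shufflesE !mem_cat => /or3P[|lx|rx].
- by case: ifP => // _; rewrite inE => /eqP->.
- case/branchP: lx => + [xs xsF ->]; rewrite size_mkseq => cs_gt0.
  have labs_xs := cartprod_labs (@lbranch_lab cs (Node ds) p q) xsF.
  case/(cartprod_mkseqP lleaf): xsF => sz_xs xsF.
  rewrite shuf_ok_node ?sz_xs // labs_xs (childrenE Sp) /mkseq -map_comp perm_refl /=.
  apply/(all_nthP lleaf) => i; rewrite sz_xs => lt_i.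
  exact: IHcs i lt_i _ _ _ _ (sub_rcons Sp lt_i) Tq (xsF i lt_i).
- case/branchP: rx => + [xs xsF ->]; rewrite size_mkseq => ds_gt0.
  have labs_xs := cartprod_labs (@rbranch_lab (Node cs) ds p q) xsF.
  case/(cartprod_mkseqP lleaf): xsF => sz_xs xsF.
  rewrite shuf_ok_node ?sz_xs // labs_xs (childrenE Tq) /mkseq -map_comp perm_refl orbT /=.
  apply/(all_nthP lleaf) => j; rewrite sz_xs => lt_j.
  exact: IHds j lt_j _ _ _ Sp (sub_rcons Tq lt_j) (xsF j lt_j).
Qed.

Lemma shuffles_complete σ τ p q A : llab A = (p, q) -> sub S p = Some σ -> sub T q = Some τ ->
    shuf_ok S T A -> {in lleaves A, forall z, is_leaf S z.1 && is_leaf T z.2} ->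
  exists2 g, g \in shuffles σ p τ q & liso A g.
Proof.
move: σ τ p q A; apply: shuffle_ind => cs ds IHcs IHds p q [l xs] lab_A Sp Tq.
have {lab_A}-> : l = (p, q) := lab_A.
have [/size0nil-> _ leaf_pq | xs_gt0] := posnP (size xs).
  have /andP[] := leaf_pq _ (mem_head _ _); rewrite (is_leafE Sp) (is_leafE Tq) /=.
  move=> /nilP-> /nilP->; exists (LNode (p, q) [::]); first exact: mem_head.
  by do 2!constructor.
rewrite shuf_ok_node // => /andP[perm_xs /allP ok_xs] leaves_xs.
have {}leaves_xs x : x \in xs -> {in lleaves x, forall z, is_leaf S z.1 && is_leaf T z.2}.
  by move=> xs_x z x_z; apply: leaves_xs; rewrite lleaves_node //; apply/flatten_mapP; exists x.
case/orP: perm_xs => [perm_l | perm_r].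
- rewrite (childrenE Sp) /mkseq -map_comp -/(mkseq (lab_l p q) _) in perm_l.
  suff [g lg iso_g] : exists2 g, g \in lbranch cs p ds q & liso (LNode (p, q) xs) g.
    by exists g; rewrite // shufflesE !mem_cat lg !orbT.
  apply: (branch_complete (p, q) (@lab_l_inj p q) (@lbranch_lab cs (Node ds) p q) xs_gt0 perm_l)
    => x i xs_x lt_i lab_x.
  exact: IHcs i lt_i _ _ _ _ lab_x (sub_rcons Sp lt_i) Tq (ok_xs x xs_x) (leaves_xs x xs_x).
- rewrite (childrenE Tq) /mkseq -map_comp -/(mkseq (lab_r p q) _) in perm_r.
  suff [g rg iso_g] : exists2 g, g \in rbranch cs p ds q & liso (LNode (p, q) xs) g.
    by exists g; rewrite // shufflesE !mem_cat rg !orbT.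
  apply: (branch_complete (p, q) (@lab_r_inj p q) (@rbranch_lab (Node cs) ds p q) xs_gt0 perm_r)
    => x j xs_x lt_j lab_x.
  exact: IHds j lt_j _ _ _ lab_x Sp (sub_rcons Tq lt_j) (ok_xs x xs_x) (leaves_xs x xs_x).
Qed.

End ShufflesOfSubtrees.

Lemma shuffles_is_shuffle S T x : x \in shuffles S [::] T [::] -> is_shuffle S T x.
Proof.
move=> Sx; have leaves_x := shuffles_lleaves Sx.
split; last exact: shuffles_shuf_ok Sx.
split; first exact: shuffles_lab Sx.
  rewrite (perm_uniq leaves_x); apply: allpairs_uniq; rewrite ?leaf_paths_uniq //.
  by move=> [a b] [a' b'] _ _ /= [-> ->].
move=> z; rewrite (perm_mem leaves_x).
apply/allpairsP/andP => [[[a b] /= [Sa Tb ->]]|[Sz Tz]]; first by rewrite -!mem_leaf_paths.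
by exists z; rewrite !mem_leaf_paths; case: z Sz Tz.
Qed.

Theorem sh_is_nshuffles S T : sh_is S T (nshuffles S T).
Proof.
pose G := shuffles S [::] T [::].
exists (nth lleaf G); rewrite -(size_shuffles S T [::] [::]) -/G; split.
- by move=> i lt_i; apply/shuffles_is_shuffle/mem_nth.
- move=> i j lt_i lt_j /(shuffles_liso_inj (mem_nth _ lt_i) (mem_nth _ lt_j)) /eqP.
  by rewrite nth_uniq ?shuffles_uniq // => /eqP.
- move=> A [[lab_A _ leaves_A] ok_A].
  have leaf_A : {in lleaves A, forall z, is_leaf S z.1 && is_leaf T z.2}.
    by move=> z; rewrite leaves_A.
  have [g Gg iso_Ag] := shuffles_complete lab_A (erefl (Some S)) (erefl (Some T)) ok_A leaf_A.
  by exists (index g G); rewrite ?index_mem // nth_index.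
Qed.

(** * Shuffles with a linear tree *)

Lemma prod_or0_map T (f : T -> nat) s : 0 < size s -> prod_or0 (map f s) = \prod_(x <- s) f x.
Proof. by case: s => // x s _; rewrite /prod_or0 big_map. Qed.

Lemma nshuffles_L cs n : 0 < size cs ->
  nshuffles (Node cs) (L n) = \sum_(k < n.+1) \prod_(c <- cs) nshuffles c (L k).
Proof.
move=> cs_gt0; have nilp_cs : nilp cs = false by rewrite /nilp eqn0Ngt cs_gt0.
elim: n => [|n IHn]; first by rewrite nshufflesE nilp_cs prod_or0_map // big_ord1 addn0.
by rewrite big_ord_recr -IHn nshufflesE nilp_cs prod_or0_map // /prod_or0 big_seq1 addnC.
Qed.

Lemma nshuffles_leaf_L n : nshuffles (L 0) (L n) = 1.
Proof. by elim: n => // n IHn; rewrite nshufflesE /prod_or0 big_seq1. Qed.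

Lemma sum_bin_diag a m : \sum_(k < m.+1) 'C(a + k, a) = 'C(a.+1 + m, a.+1).
Proof.
elim: m => [|m IHm]; first by rewrite big_ord1 !addn0 !binn.
by rewrite big_ord_recr IHm /= [in RHS]addnS binS addSnnS.
Qed.

Lemma nshuffles_L_L a m : nshuffles (L a) (L m) = 'C(a + m, a).
Proof.
elim: a m => [|a IHa] m; first by rewrite nshuffles_leaf_L bin0.
rewrite [L a.+1]/= nshuffles_L // -sum_bin_diag.
by apply: eq_bigr => k _; rewrite big_seq1 IHa.
Qed.

Lemma sum_cubes k : \sum_(j < k.+1) j.+1 ^ 3 = 'C(k.+2, 2) ^ 2.
Proof.
elim: k => [|k IHk]; first by rewrite big_ord1.
rewrite big_ord_recr IHk [in RHS]binS bin1.
have := mul_bin_diag k.+2 1; rewrite bin1 /=; nia.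
Qed.

Lemma nshuffles_claw_L k : nshuffles (Node [:: L 1; L 1; L 1]) (L k) = 'C(k.+2, 2) ^ 2.
Proof.
rewrite nshuffles_L // -sum_cubes; apply: eq_bigr => j _.
by rewrite !big_cons big_nil nshuffles_L_L bin1 add1n muln1 !expnS expn0 muln1.
Qed.

Lemma nshuffles_treeS n : nshuffles treeS (L n) = \sum_(k < n.+1) 'C(k.+2, 2) ^ 2.
Proof. by rewrite nshuffles_L //; apply: eq_bigr => k _; rewrite big_seq1 nshuffles_claw_L. Qed.

Lemma nshuffles_treeR n : nshuffles treeR (L n) = \sum_(k < n.+1) 'C(k.+2, 2) ^ 2.
Proof.
rewrite nshuffles_L //; apply: eq_bigr => k _.
by rewrite !big_cons big_nil nshuffles_L_L muln1 add2n.
Qed.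

Lemma tiso_list_size cs ds : tiso_list cs ds -> size cs = size ds.
Proof. by elim=> //= c cs1 d ds1 ds2 _ _ ->; rewrite !size_cat addnS. Qed.

Lemma tiso_root_size cs ds : tiso (Node cs) (Node ds) -> size cs = size ds.
Proof. by move=> iso; inversion iso; apply: tiso_list_size. Qed.

Theorem mainTheorem7 :
  (forall n : nat,
     sh_is treeS (L n) (\sum_(k < n.+1) 'C(k.+2, 2) ^ 2) /\
     sh_is treeR (L n) (\sum_(k < n.+1) 'C(k.+2, 2) ^ 2)) /\
  ~ tiso treeS treeR.
Proof.
split=> [n|]; last by move/tiso_root_size.
by split; [rewrite -nshuffles_treeS | rewrite -nshuffles_treeR]; apply: sh_is_nshuffles.
Qed.
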